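(* Let $\mathcal{W}\subset\mathbb{R}^2$ be open with conformal metric $g=\lambda(x,y)(dx^2+dy^2)$, $\lambda>0$, and let $f:\mathbb{R}\to(0,\infty)$ be smooth. A graph $z=z(x,y)$ in $\mathcal{W}\times_f\mathbb{R}$ (metric $f(z)g+dz^2$), oriented by the upward unit normal, has extrinsic curvature $K_{\rm ext}$ if and only if $z$ satisfies $Ar+2Bs+Ct+rt-s^2=E$, where $p=z_x,q=z_y,r=z_{xx},s=z_{xy},t=z_{yy}$ and $A=\frac{p\lambda_x}{2\lambda}-\frac{q\lambda_y}{2\lambda}-\frac{q^2f'}{f}-\frac{f'}{2}\lambda$, $B=\frac{p\lambda_y}{2\lambda}+\frac{q\lambda_x}{2\lambda}+\frac{pqf'}{f}$, $C=-\frac{p\lambda_x}{2\lambda}+\frac{q\lambda_y}{2\lambda}-\frac{p^2f'}{f}-\frac{f'}{2}\lambda$, $E=K_{\rm ext}(f\lambda+p^2+q^2)^2-AC+B^2$, with $f,f'$ evaluated at $z$ and $\lambda$ at $(x,y)$. In particular $AC-B^2+E=K_{\rm ext}(f\lambda+p^2+q^2)^2$, so the equation is elliptic when $K_{\rm ext}>0$.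
   Context: Extrinsic curvature $K_{\rm ext}=\det(II)/\det(I)$ for the graph in the warped product Riemannian 3-manifold. *)

From Stdlib Require Import Reals.
Open Scope R_scope.

Definition sum3 (h : nat -> R) : R := h 0%nat + h 1%nat + h 2%nat.

Definition open2 (W : R -> R -> Prop) : Prop :=
  forall x y, W x y -> exists eps, 0 < eps /\
    forall u v, (u - x)^2 + (v - y)^2 < eps^2 -> W u v.

Definition smooth1 (f : R -> R) : Prop :=
  exists F : nat -> R -> R, F 0%nat = f /\
    forall k x, derivable_pt_lim (F k) x (F (S k) x).

(* Coefficients g_ij of the warped product metric f(z) lambda(x,y)(dx^2+dy^2) + dz^2
   on W x R, in the coordinates (x, y, w) (w the R-coordinate). *)
Definition warped_metric (lam : R -> R -> R) (f : R -> R) (i j : nat) (x y w : R) : R :=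
  if Nat.eqb i j then (if Nat.eqb i 2 then 1 else f w * lam x y) else 0.

Definition partial3 (F : R -> R -> R -> R) (c : nat) (x y w l : R) : Prop :=
  match c with
  | O => derivable_pt_lim (fun u => F u y w) x l
  | S O => derivable_pt_lim (fun u => F x u w) y l
  | _ => derivable_pt_lim (fun u => F x y u) w l
  end.

Definition ginner (lam : R -> R -> R) (f : R -> R) (x y w : R) (u v : nat -> R) : R :=
  sum3 (fun a => sum3 (fun b => warped_metric lam f a b x y w * u a * v b)).

(* Christoffel symbols of the first kind Gamma_{ab,d}
   = 1/2 (d_a g_bd + d_b g_ad - d_d g_ab), where dg c i j = d_c g_ij. *)
Definition christoffel1 (dg : nat -> nat -> nat -> R -> R -> R -> R)
  (a b d : nat) (x y w : R) : R :=
  / 2 * (dg a b d x y w + dg b a d x y w - dg d a b x y w).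

(* Graph X(x,y) = (x, y, z(x,y)), with p = z_x, q = z_y, r = z_xx, s = z_xy, t = z_yy.
   Tangent vectors X_x = (1,0,p), X_y = (0,1,q). *)
Definition gtangent (p q : R) (i : nat) : nat -> R :=
  fun c => match i with
           | O => match c with O => 1 | S O => 0 | _ => p end
           | _ => match c with O => 0 | S O => 1 | _ => q end
           end.

(* Second derivatives X_xx = (0,0,r), X_xy = X_yx = (0,0,s), X_yy = (0,0,t). *)
Definition gsecond (r s t : R) (i j : nat) : nat -> R :=
  fun c => match c with
           | S (S O) =>
               match i, j with
               | O, O => r
               | S _, S _ => t
               | _, _ => s
               end
           | _ => 0
           end.

Definition fund1 (lam : R -> R -> R) (f : R -> R) (x y zv p q : R) (i j : nat) : R :=
  ginner lam f x y zv (gtangent p q i) (gtangent p q j).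

(* Second fundamental form II_ij = <nabla_{X_i} X_j, N>
   = sum_d N^d ( sum_c g_dc X_ij^c + sum_{a,b} Gamma_{ab,d} X_i^a X_j^b ). *)
Definition fund2 (lam : R -> R -> R) (f : R -> R)
  (dg : nat -> nat -> nat -> R -> R -> R -> R)
  (x y zv p q r s t : R) (N : nat -> R) (i j : nat) : R :=
  sum3 (fun d => N d *
     (sum3 (fun c => warped_metric lam f d c x y zv * gsecond r s t i j c)
      + sum3 (fun a => sum3 (fun b =>
            christoffel1 dg a b d x y zv * gtangent p q i a * gtangent p q j b)))).

Definition Kext (lam : R -> R -> R) (f : R -> R)
  (dg : nat -> nat -> nat -> R -> R -> R -> R)
  (x y zv p q r s t : R) (N : nat -> R) : R :=
  (fund2 lam f dg x y zv p q r s t N 0 0 * fund2 lam f dg x y zv p q r s t N 1 1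
     - fund2 lam f dg x y zv p q r s t N 0 1 ^ 2)
  / (fund1 lam f x y zv p q 0 0 * fund1 lam f x y zv p q 1 1
     - fund1 lam f x y zv p q 0 1 ^ 2).

Definition upward_unit_normal (lam : R -> R -> R) (f : R -> R) (x y zv p q : R)
  (N : nat -> R) : Prop :=
  ginner lam f x y zv N (gtangent p q 0) = 0 /\
  ginner lam f x y zv N (gtangent p q 1) = 0 /\
  ginner lam f x y zv N N = 1 /\
  0 < N 2%nat.

(* Coefficients of the Monge-Ampere type equation; fz = f(z), f'z = f'(z),
   l = lambda(x,y), lx = lambda_x(x,y), ly = lambda_y(x,y). *)
Definition coefA (l lx ly fz f'z p q : R) : R :=
  p * lx / (2 * l) - q * ly / (2 * l) - q^2 * f'z / fz - f'z / 2 * l.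
Definition coefB (l lx ly fz f'z p q : R) : R :=
  p * ly / (2 * l) + q * lx / (2 * l) + p * q * f'z / fz.
Definition coefC (l lx ly fz f'z p q : R) : R :=
  - (p * lx / (2 * l)) + q * ly / (2 * l) - p^2 * f'z / fz - f'z / 2 * l.
Definition coefE (K l lx ly fz f'z p q : R) : R :=
  K * (fz * l + p^2 + q^2)^2
  - coefA l lx ly fz f'z p q * coefC l lx ly fz f'z p q
  + coefB l lx ly fz f'z p q ^ 2.

(* In the coordinates (x, y, w) the only nonconstant metric coefficients are
   g_11 = g_22 = f(w) lambda(x,y), so the Christoffel symbols, and with them the
   second fundamental form of the graph, are explicit. Solving the normal
   equations gives N = N_3 (-p/(f lambda), -q/(f lambda), 1) with
   N_3^2 = f lambda / D, where D = f lambda + p^2 + q^2 = det(I) / (f lambda).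
   Expanding det(II) then yields
   K_ext = ((r + C)(t + A) - (s - B)^2) / D^2,
   which is the stated equation multiplied out; it is a pointwise identity. *)

From Stdlib Require Import Reals Lra Lia.
Open Scope R_scope.

Definition warped_metric_deriv (lam lamx lamy : R -> R -> R) (f f' : R -> R)
  (c i j : nat) (x y w : R) : R :=
  match i, j with
  | O, O | S O, S O =>
      match c with
      | O => f w * lamx x y
      | S O => f w * lamy x y
      | _ => f' w * lam x y
      end
  | _, _ => 0
  end.

Lemma partial3_warped_metric_eq (lam lamx lamy : R -> R -> R) (f f' : R -> R)
  (dg : nat -> nat -> nat -> R -> R -> R -> R) (x y w : R) :
  derivable_pt_lim (fun u => lam u y) x (lamx x y) ->
  derivable_pt_lim (fun v => lam x v) y (lamy x y) ->
  derivable_pt_lim f w (f' w) ->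
  (forall c i j, (c < 3)%nat -> (i < 3)%nat -> (j < 3)%nat ->
     partial3 (warped_metric lam f i j) c x y w (dg c i j x y w)) ->
  forall c i j, (c < 3)%nat -> (i < 3)%nat -> (j < 3)%nat ->
    dg c i j x y w = warped_metric_deriv lam lamx lamy f f' c i j x y w.
Proof.
intros Hlx Hly Hf Hdg c i j Hc Hi Hj.
pose proof (Hdg c i j Hc Hi Hj) as H.
destruct c as [|[|[|c]]]; try lia; destruct i as [|[|[|i]]]; try lia;
  destruct j as [|[|[|j]]]; try lia;
  unfold partial3, warped_metric, warped_metric_deriv in *; simpl in *;
  eapply uniqueness_limite; try exact H;
  first [ apply derivable_pt_lim_const
        | now apply derivable_pt_lim_scal
        | now apply derivable_pt_lim_scal_right ].
Qed.

Lemma upward_unit_normal_coords (lam : R -> R -> R) (f : R -> R) (x y w p q : R)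
  (N : nat -> R) :
  0 < f w * lam x y -> upward_unit_normal lam f x y w p q N ->
  let a := f w * lam x y in
  N 0%nat = - p * N 2%nat / a /\ N 1%nat = - q * N 2%nat / a /\
  N 2%nat ^ 2 = a / (a + p ^ 2 + q ^ 2).
Proof.
intros Ha HN a.
unfold upward_unit_normal, ginner, sum3, warped_metric, gtangent in HN; simpl in HN.
destruct HN as [H0 [H1 [H2 _]]].
fold a in Ha, H0, H1, H2.
assert (E0 : N 0%nat = - p * N 2%nat / a) by (field_simplify_eq; lra).
assert (E1 : N 1%nat = - q * N 2%nat / a) by (field_simplify_eq; lra).
repeat split; try assumption.
assert (HD : 0 < a + p ^ 2 + q ^ 2) by nra.
assert (Hnorm : N 2%nat ^ 2 * (a + p ^ 2 + q ^ 2) / a = 1).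
{ rewrite <- H2, E0, E1; field; lra. }
rewrite <- (Rmult_1_r (a / _)), <- Hnorm; field; lra.
Qed.

Lemma Kext_graph_eq (lam lamx lamy : R -> R -> R) (f f' : R -> R)
  (dg : nat -> nat -> nat -> R -> R -> R -> R) (x y w p q r s t : R) (N : nat -> R) :
  0 < lam x y -> 0 < f w ->
  (forall c i j, (c < 3)%nat -> (i < 3)%nat -> (j < 3)%nat ->
     dg c i j x y w = warped_metric_deriv lam lamx lamy f f' c i j x y w) ->
  upward_unit_normal lam f x y w p q N ->
  let A := coefA (lam x y) (lamx x y) (lamy x y) (f w) (f' w) p q in
  let B := coefB (lam x y) (lamx x y) (lamy x y) (f w) (f' w) p q in
  let C := coefC (lam x y) (lamx x y) (lamy x y) (f w) (f' w) p q in
  Kext lam f dg x y w p q r s t N =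
    ((r + C) * (t + A) - (s - B) ^ 2) / (f w * lam x y + p ^ 2 + q ^ 2) ^ 2.
Proof.
intros Hl Hf Hdg HN A B C.
assert (Ha : 0 < f w * lam x y) by nra.
destruct (upward_unit_normal_coords _ _ _ _ _ _ _ _ Ha HN) as [E0 [E1 HN2]].
set (a := f w * lam x y) in *.
set (D := a + p ^ 2 + q ^ 2) in *.
assert (HD : 0 < D) by (unfold D; nra).
transitivity (N 2%nat ^ 2 * ((r + C) * (t + A) - (s - B) ^ 2) / (a * D)).
2: { rewrite HN2; field; lra. }
unfold Kext, fund2, fund1, ginner, sum3, christoffel1, warped_metric, gtangent, gsecond.
rewrite !Hdg by lia.
unfold warped_metric_deriv; simpl.
rewrite E0, E1.
unfold A, B, C, coefA, coefB, coefC, D, a in *.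
field; repeat split; nra.
Qed.

Lemma monge_ampere_iff (K r s t A B C D : R) :
  0 < D ->
  ((r + C) * (t + A) - (s - B) ^ 2) / D ^ 2 = K <->
  A * r + 2 * B * s + C * t + r * t - s ^ 2 = K * D ^ 2 - A * C + B ^ 2.
Proof.
intro HD.
assert (HD2 : 0 < D ^ 2) by nra.
split; intro H.
- rewrite <- H; field; lra.
- apply (Rmult_eq_reg_r (D ^ 2)); [| lra].
  field_simplify; lra.
Qed.

Theorem mainTheorem13
  (W : R -> R -> Prop) (lam lamx lamy : R -> R -> R) (f f' : R -> R)
  (dg : nat -> nat -> nat -> R -> R -> R -> R)
  (z p q r s t : R -> R -> R) (N : R -> R -> nat -> R) (K : R -> R -> R) :
  open2 W ->
  (forall x y, W x y -> 0 < lam x y) ->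
  (forall x y, W x y -> derivable_pt_lim (fun u => lam u y) x (lamx x y)) ->
  (forall x y, W x y -> derivable_pt_lim (fun v => lam x v) y (lamy x y)) ->
  smooth1 f ->
  (forall w, 0 < f w) ->
  (forall w, derivable_pt_lim f w (f' w)) ->
  (* dg c i j is the partial derivative d_c g_ij of the ambient metric on W x R *)
  (forall c i j x y w, W x y -> (c < 3)%nat -> (i < 3)%nat -> (j < 3)%nat ->
     partial3 (warped_metric lam f i j) c x y w (dg c i j x y w)) ->
  (* p, q, r, s, t are the partial derivatives of the graph function z *)
  (forall x y, W x y -> derivable_pt_lim (fun u => z u y) x (p x y)) ->
  (forall x y, W x y -> derivable_pt_lim (fun v => z x v) y (q x y)) ->
  (forall x y, W x y -> derivable_pt_lim (fun u => p u y) x (r x y)) ->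
  (forall x y, W x y -> derivable_pt_lim (fun v => p x v) y (s x y)) ->
  (forall x y, W x y -> derivable_pt_lim (fun u => q u y) x (s x y)) ->
  (forall x y, W x y -> derivable_pt_lim (fun v => q x v) y (t x y)) ->
  (* N is the upward unit normal field of the graph *)
  (forall x y, W x y -> upward_unit_normal lam f x y (z x y) (p x y) (q x y) (N x y)) ->
  ((forall x y, W x y ->
      Kext lam f dg x y (z x y) (p x y) (q x y) (r x y) (s x y) (t x y) (N x y) = K x y)
   <->
   (forall x y, W x y ->
      let A := coefA (lam x y) (lamx x y) (lamy x y) (f (z x y)) (f' (z x y)) (p x y) (q x y) in
      let B := coefB (lam x y) (lamx x y) (lamy x y) (f (z x y)) (f' (z x y)) (p x y) (q x y) in
      let C := coefC (lam x y) (lamx x y) (lamy x y) (f (z x y)) (f' (z x y)) (p x y) (q x y) in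
      let E := coefE (K x y) (lam x y) (lamx x y) (lamy x y) (f (z x y)) (f' (z x y))
                     (p x y) (q x y) in
      A * r x y + 2 * B * s x y + C * t x y + r x y * t x y - s x y ^ 2 = E))
  /\
  (forall x y, W x y ->
      let A := coefA (lam x y) (lamx x y) (lamy x y) (f (z x y)) (f' (z x y)) (p x y) (q x y) in
      let B := coefB (lam x y) (lamx x y) (lamy x y) (f (z x y)) (f' (z x y)) (p x y) (q x y) in
      let C := coefC (lam x y) (lamx x y) (lamy x y) (f (z x y)) (f' (z x y)) (p x y) (q x y) in
      let E := coefE (K x y) (lam x y) (lamx x y) (lamy x y) (f (z x y)) (f' (z x y))
                     (p x y) (q x y) in
      A * C - B ^ 2 + E = K x y * (f (z x y) * lam x y + p x y ^ 2 + q x y ^ 2) ^ 2).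
Proof.
intros _ Hl Hlx Hly _ Hf Hf' Hdg _ _ _ _ _ _ HN.
assert (Hpointwise : forall x y, W x y ->
  (Kext lam f dg x y (z x y) (p x y) (q x y) (r x y) (s x y) (t x y) (N x y) = K x y <->
   let A := coefA (lam x y) (lamx x y) (lamy x y) (f (z x y)) (f' (z x y)) (p x y) (q x y) in
   let B := coefB (lam x y) (lamx x y) (lamy x y) (f (z x y)) (f' (z x y)) (p x y) (q x y) in
   let C := coefC (lam x y) (lamx x y) (lamy x y) (f (z x y)) (f' (z x y)) (p x y) (q x y) in
   let E := coefE (K x y) (lam x y) (lamx x y) (lamy x y) (f (z x y)) (f' (z x y))
                  (p x y) (q x y) in
   A * r x y + 2 * B * s x y + C * t x y + r x y * t x y - s x y ^ 2 = E)).
{ intros x y Hxy.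
  pose proof (Hl x y Hxy); pose proof (Hf (z x y)).
  erewrite Kext_graph_eq; [| auto | auto | | exact (HN x y Hxy)].
  - apply monge_ampere_iff; nra.
  - apply partial3_warped_metric_eq; auto. }
split; [split|].
- intros H x y Hxy; apply (Hpointwise x y Hxy), H, Hxy.
- intros H x y Hxy; apply (Hpointwise x y Hxy), H, Hxy.
- intros x y _; cbv zeta; unfold coefE; ring.
Qed.
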